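(* Let $n\ge1$, $b_i,B_i,d_i\ge0$ ($1\le i\le n$), $\theta_{i,j}\ge0$ ($i\ne j$), such that the directed graph on $\{1,\dots,n\}$ with edge set $\{(i,j):i\ne j,\ \theta_{i,j}>0\}$ is strongly connected, all eigenvalues of the matrix $A$ (defined in the context) have negative real parts, and $B=(B_1,\dots,B_n)\neq0$. Then there exist $v\in\mathbb{R}^n$ with positive coordinates, $c>0$ and $R\ge0$ such that $$v\cdot(Ax+B)<-c\,(v\cdot x+1)$$ for every $x\in\mathbb{R}_+^n$ with $\|x\|_1\ge R$.
   Context: $A\in\mathcal{M}_n(\mathbb{R})$ has entries $A_{i,i}=b_i-d_i-\sum_{j\ne i}\theta_{i,j}$ and $A_{i,j}=\theta_{j,i}$ for $i\ne j$; $\cdot$ is the usual scalar product. *)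

From HB Require Import structures.
From mathcomp Require Import all_boot all_order all_algebra.
From mathcomp Require Import reals.
From mathcomp Require Import complex.
Set Implicit Arguments. Unset Strict Implicit. Unset Printing Implicit Defensive.
Import Order.TTheory GRing.Theory Num.Theory.
Local Open Scope ring_scope.

Definition Amat (R : realType) (n : nat) (b d : 'I_n -> R) (theta : 'I_n -> 'I_n -> R)
  : 'M[R]_n :=
  \matrix_(i, j) (if i == j then b i - d i - \sum_(k | k != i) theta i k
                  else theta j i).

Definition theta_edge (R : realType) (n : nat) (theta : 'I_n -> 'I_n -> R) : rel 'I_n :=
  fun i j => (i != j) && (0 < theta i j).

Definition strongly_connected (n : nat) (e : rel 'I_n) : Prop :=
  forall i j : 'I_n, connect e i j.

Definition complex_eigenvalue (R : realType) (n : nat) (M : 'M[R]_n) (z : R[i]) : bool :=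
  eigenvalue (map_mx (fun x : R => (x%:C)%C) M) z.

Definition dotv (R : realType) (n : nat) (u w : 'cV[R]_n) : R :=
  \sum_(i < n) u i 0 * w i 0.

Definition norm1 (R : realType) (n : nat) (x : 'cV[R]_n) : R :=
  \sum_(i < n) `|x i 0|.

From HB Require Import structures.
From mathcomp Require Import all_boot all_order all_algebra.
From mathcomp Require Import reals.
From mathcomp Require Import complex.
From mathcomp Require Import polyrcf classical_sets lra.
Import Order.TTheory GRing.Theory Num.Theory.
Local Open Scope ring_scope.

(* M := -A is a Z-matrix (its off-diagonal entries are <= 0), and the spectral
   hypothesis makes det (M + t) nonzero, hence positive, for every t >= 0.
   Splitting off the first row and column and using Schur complements, an
   induction on the size shows that such a Z-matrix is semipositive
   (w M > 0 for some w > 0), and that a semipositive Z-matrix has positive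
   determinant and solves x M = y with x >= 0 for every y >= 0.  Solving
   x M = (1, ..., 1) yields v := x^T > 0 with v . A y = - |y|_1 for y >= 0,
   a linear negative drift that dominates v . B and v . y for large |y|_1. *)

Section MMatrices.
Set Implicit Arguments. Unset Strict Implicit. Unset Printing Implicit Defensive.
Variable R : realType.
Implicit Types (p : {poly R}) (k : nat).

Lemma poly_ge0_right_limit p q : (forall t, q < t -> 0 <= p.[t]) -> 0 <= p.[q].
Proof.
move=> p_ge0; rewrite leNgt; apply/negP => pq_lt0.
have pq_neg : 0 < - p.[q] by rewrite oppr_gt0.
have [e e_gt0 near_q] := poly_cont q p pq_neg.
have : `|q + e / 2 - q| < e by rewrite addrAC subrr add0r ger0_norm; lra.
move/near_q; rewrite ltr_norml => /andP[_ lt_p].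
have : 0 <= p.[q + e / 2] by apply: p_ge0; lra.
lra.
Qed.

Lemma poly_last_root p t0 T : p.[t0] <= 0 -> (forall t, T <= t -> 0 < p.[t]) ->
  exists q, [/\ t0 <= q, p.[q] = 0 & forall t, q < t -> 0 < p.[t]].
Proof.
move=> pt0_le0 p_gt0.
pose E : set R := fun t => t0 <= t /\ p.[t] <= 0.
have supE : has_sup E.
  split; first by exists t0.
  exists T => t [_ pt_le0]; rewrite leNgt; apply/negP => /ltW /p_gt0.
  by rewrite ltNge pt_le0.
have sup_ge t : t0 <= t -> p.[t] <= 0 -> t <= sup E.
  by move=> t0t pt_le0; apply: (sup_upper_bound supE).
have t0_le_sup := sup_ge t0 (lexx t0) pt0_le0.
have right_gt0 t : sup E < t -> 0 < p.[t].
  move=> lt_t; rewrite ltNge; apply/negP => pt_le0.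
  have := sup_ge t (le_trans t0_le_sup (ltW lt_t)) pt_le0.
  by rewrite leNgt lt_t.
exists (sup E); split => //.
apply/eqP; rewrite eq_le poly_ge0_right_limit ?andbT => [|t /right_gt0/ltW] //.
rewrite leNgt; apply/negP => psup_gt0.
have [e e_gt0 near_sup] := poly_cont (sup E) p psup_gt0.
have [t [t0t pt_le0] lt_t] := sup_adherent e_gt0 supE.
have t_le := sup_ge t t0t pt_le0.
have : `|t - sup E| < e by rewrite ltr_norml; apply/andP; split; lra.
by move/near_sup; rewrite ltr_norml => /andP[]; lra.
Qed.

Definition shifted_det_poly k (M : 'M[R]_k) : {poly R} :=
  \det (map_mx polyC M + 'X%:M).

Lemma horner_shifted_det_poly k (M : 'M[R]_k) t :
  (shifted_det_poly M).[t] = \det (M + t%:M).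
Proof.
rewrite /shifted_det_poly -horner_evalE -det_map_mx map_mxD map_scalar_mx /=.
rewrite horner_evalE hornerX; congr (\det (_ + _)).
by apply/matrixP => i j; rewrite !mxE /= horner_evalE hornerC.
Qed.

Definition Zmatrix k (M : 'M[R]_k) := forall i j, i != j -> M i j <= 0.
Definition nonneg_row k (x : 'rV[R]_k) := forall j, 0 <= x 0 j.
Definition pos_row k (x : 'rV[R]_k) := forall j, 0 < x 0 j.
Definition semipositive k (M : 'M[R]_k) :=
  exists2 w : 'rV[R]_k, pos_row w & pos_row (w *m M).
(* With 0 < \det M, this says that M^-1 has nonnegative entries. *)
Definition nonneg_solvable k (M : 'M[R]_k) :=
  forall y : 'rV[R]_k, nonneg_row y -> exists2 x, nonneg_row x & x *m M = y.
Definition shifted_det_pos k (M : 'M[R]_k) :=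
  forall t, 0 <= t -> 0 < \det (M + t%:M).

Lemma Zmatrix_shift k (M : 'M[R]_k) t : Zmatrix M -> Zmatrix (M + t%:M).
Proof. by move=> ZM i j ij; rewrite !mxE (negbTE ij) mulr0n addr0; apply: ZM. Qed.

Lemma row_mx_scalar_cases k (x : 'rV[R]_(1 + k)) :
  exists x0 x', x = row_mx x0%:M x'.
Proof. by exists (lsubmx x 0 0), (rsubmx x); rewrite -mx11_scalar hsubmxK. Qed.

Lemma block_mx_scalar_cases k (M : 'M[R]_(1 + k)) :
  exists a r c N, M = block_mx a%:M r c N.
Proof.
exists (ulsubmx M 0 0), (ursubmx M), (dlsubmx M), (drsubmx M).
by rewrite -mx11_scalar submxK.
Qed.

Lemma row_mx_scalarP (P : R -> Prop) k x0 (x' : 'rV[R]_k) :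
  (forall j, P (row_mx x0%:M x' 0 j)) <-> P x0 /\ forall j, P (x' 0 j).
Proof.
split=> [Px | [Px0 Px'] j].
  split=> [|j]; last by have := Px (rshift 1 j); rewrite row_mxEr.
  by have := Px (lshift k 0); rewrite row_mxEl mxE eqxx mulr1n.
by rewrite -(splitK j); case: (split j) => i /=;
  rewrite ?row_mxEl ?row_mxEr // ord1 mxE eqxx mulr1n.
Qed.

Lemma pos_row_mxP k x0 (x' : 'rV[R]_k) :
  pos_row (row_mx x0%:M x') <-> 0 < x0 /\ pos_row x'.
Proof. exact: (row_mx_scalarP (fun y => 0 < y)). Qed.

Lemma nonneg_row_mxP k x0 (x' : 'rV[R]_k) :
  nonneg_row (row_mx x0%:M x') <-> 0 <= x0 /\ nonneg_row x'.
Proof. exact: (row_mx_scalarP (fun y => 0 <= y)). Qed.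

Lemma nonneg_solvable_nonneg_preimage k (N : 'M[R]_k) (u : 'rV[R]_k) :
  nonneg_solvable N -> N \in unitmx -> nonneg_row (u *m N) -> nonneg_row u.
Proof.
move=> solN Nu uN_ge0; have [x x_ge0 xN] := solN _ uN_ge0.
by rewrite -(can_inj (mulmxK Nu) xN).
Qed.

Lemma row_mul_col_le0 k (x : 'rV[R]_k) (c : 'cV[R]_k) :
  nonneg_row x -> (forall i, c i 0 <= 0) -> (x *m c) 0 0 <= 0.
Proof. by move=> x_ge0 c_le0; rewrite mxE sumr_le0 // => i _; rewrite mulr_ge0_le0. Qed.

Section Block.
Variables (k : nat) (a : R) (r : 'rV[R]_k) (c : 'cV[R]_k) (N : 'M[R]_k).
Local Notation M := (block_mx a%:M r c N).

Lemma mul_row_block_scalar x0 (x' : 'rV[R]_k) :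
  row_mx x0%:M x' *m M = row_mx (x0 * a + (x' *m c) 0 0)%:M (x0 *: r + x' *m N).
Proof.
by rewrite mul_row_block -scalar_mxM mul_scalar_mx {1}[x' *m c]mx11_scalar raddfD.
Qed.

Lemma block_mx_shift t : M + t%:M = block_mx (a + t)%:M r c (N + t%:M).
Proof. by rewrite (scalar_mx_block 1 k) add_block_mx !addr0 raddfD. Qed.

Lemma Zmatrix_block :
  Zmatrix M -> [/\ Zmatrix N, forall j, r 0 j <= 0 & forall i, c i 0 <= 0].
Proof.
move=> ZM; split=> [i j ij | j | i].
- have := ZM (rshift 1 i) (rshift 1 j).
  by rewrite block_mxEdr (inj_eq (@rshift_inj _ _)); apply.
- by have := ZM (lshift k 0) (rshift 1 j); rewrite block_mxEur eq_lrshift; apply.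
- by have := ZM (rshift 1 i) (lshift k 0); rewrite block_mxEdl eq_rlshift; apply.
Qed.

Lemma Zmatrix_block_schur_vector :
  Zmatrix M -> nonneg_solvable N -> exists2 z, nonneg_row z & z *m N = - r.
Proof.
by case/Zmatrix_block=> _ r_le0 _ solN; apply: solN => j; rewrite mxE oppr_ge0.
Qed.

Lemma det_block_schur (z : 'rV[R]_k) :
  z *m N = - r -> \det M = (a + (z *m c) 0 0) * \det N.
Proof.
move=> zN; pose U : 'M[R]_(1 + k) := block_mx 1 z 0 1.
have /(congr1 determinant) : U *m M = block_mx (a + (z *m c) 0 0)%:M 0 c N.
  by rewrite mulmx_block !mul1mx !mul0mx !add0r zN addrN {1}[z *m c]mx11_scalar raddfD.
by rewrite det_mulmx det_ublock det_lblock !det1 !mul1r det_scalar1.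
Qed.

Lemma semipositive_block_drsub : Zmatrix M -> semipositive M -> semipositive N.
Proof.
case/Zmatrix_block=> _ r_le0 _ [w w_gt0 wM_gt0].
have [w0 [w' def_w]] := row_mx_scalar_cases w.
move: w_gt0 wM_gt0; rewrite def_w mul_row_block_scalar.
case/pos_row_mxP=> w0_gt0 w'_gt0 /pos_row_mxP[_ wM_gt0].
exists w' => // j; have := wM_gt0 j; rewrite mxE [(w0 *: r) 0 j]mxE.
by have := r_le0 j; nra.
Qed.

Lemma schur_complement_gt0 (z : 'rV[R]_k) :
  Zmatrix M -> nonneg_solvable N -> N \in unitmx -> z *m N = - r ->
  semipositive M -> 0 < a + (z *m c) 0 0.
Proof.
(* u := w' - w0 z has u N >= 0, hence u >= 0, u c <= 0 and w0 (a + z c) >= (w M)_0. *)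
case/Zmatrix_block=> _ _ c_le0 solN Nu zN [w w_gt0 wM_gt0].
have [w0 [w' def_w]] := row_mx_scalar_cases w.
move: w_gt0 wM_gt0; rewrite def_w mul_row_block_scalar.
case/pos_row_mxP=> w0_gt0 _ /pos_row_mxP[wMl_gt0 wMr_gt0].
have u_ge0 : nonneg_row (w' - w0 *: z).
  apply: nonneg_solvable_nonneg_preimage solN Nu _ => j.
  by rewrite mulmxBl -scalemxAl zN scalerN opprK addrC ltW.
have := row_mul_col_le0 u_ge0 c_le0.
rewrite mulmxBl -scalemxAl mxE [(- (w0 *: (z *m c))) 0 0]mxE.
rewrite [(w0 *: (z *m c)) 0 0]mxE => uc_le0.
by rewrite -(pmulr_rgt0 _ w0_gt0) mulrDr; lra.
Qed.

Lemma nonneg_solvable_block (z : 'rV[R]_k) :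
  Zmatrix M -> nonneg_solvable N -> nonneg_row z -> z *m N = - r ->
  0 < a + (z *m c) 0 0 -> nonneg_solvable M.
Proof.
case/Zmatrix_block=> _ _ c_le0 solN z_ge0 zN s_gt0 y.
have [y0 [y' ->]] := row_mx_scalar_cases y; case/nonneg_row_mxP=> y0_ge0 y'_ge0.
have [x' x'_ge0 x'N] := solN _ y'_ge0.
have x'c_le0 := row_mul_col_le0 x'_ge0 c_le0.
pose x0 := (y0 - (x' *m c) 0 0) / (a + (z *m c) 0 0).
have x0_ge0 : 0 <= x0 by rewrite divr_ge0 ?(ltW s_gt0) // subr_ge0 (le_trans x'c_le0).
have x0s : x0 * (a + (z *m c) 0 0) = y0 - (x' *m c) 0 0 by rewrite divfK ?gt_eqF.
exists (row_mx x0%:M (x' + x0 *: z)).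
  apply/nonneg_row_mxP; split=> // j.
  by rewrite !mxE; apply: addr_ge0 (x'_ge0 j) (mulr_ge0 x0_ge0 (z_ge0 j)).
rewrite mul_row_block_scalar !mulmxDl -!scalemxAl zN x'N scalerN addrCA subrr addr0.
by congr (row_mx _%:M _); rewrite mxE [(x0 *: (z *m c)) 0 0]mxE; lra.
Qed.

End Block.

Lemma semipositive_Zmatrix_det_gt0 k (M : 'M[R]_k) :
  Zmatrix M -> semipositive M -> 0 < \det M /\ nonneg_solvable M.
Proof.
elim: k M => [|k IH] M ZM semM.
  split=> [|y _]; first by rewrite det_mx00.
  by exists 0; [case | apply/matrixP => ? []].
have [a [r [c [N def_M]]]] := block_mx_scalar_cases (M : 'M_(1 + k)).
rewrite {M}def_M in ZM semM *.
have [ZN _ _] := Zmatrix_block ZM.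
have [detN_gt0 solN] := IH N ZN (semipositive_block_drsub ZM semM).
have Nu : N \in unitmx by rewrite unitmxE unitfE gt_eqF.
have [z z_ge0 zN] := Zmatrix_block_schur_vector ZM solN.
have s_gt0 := schur_complement_gt0 ZM solN Nu zN semM.
split; first by rewrite (det_block_schur _ _ zN) mulr_gt0.
exact: nonneg_solvable_block ZM solN z_ge0 zN s_gt0.
Qed.

Lemma semipositive_shift k (M : 'M[R]_k) t :
  1 + \sum_i \sum_j `|M i j| <= t -> semipositive (M + t%:M).
Proof.
move=> large_t; exists (const_mx 1) => j; first by rewrite mxE.
rewrite mulmxDr mul_mx_scalar !mxE mulr1.
suff : - \sum_i \sum_j `|M i j| <= \sum_i (const_mx 1 : 'rV[R]_k) 0 i * M i j by lra.
rewrite -sumrN; apply: ler_sum => i _; rewrite mxE mul1r lerNl.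
rewrite (le_trans (ler_norm _)) // normrN (bigD1 j) //= lerDl.
by rewrite sumr_ge0.
Qed.

Lemma Zmatrix_shifted_det_last_root k (M : 'M[R]_k) t0 :
  Zmatrix M -> \det (M + t0%:M) <= 0 ->
  exists q, [/\ t0 <= q, \det (M + q%:M) = 0 & forall t, q < t -> 0 < \det (M + t%:M)].
Proof.
move=> ZM; rewrite -horner_shifted_det_poly => det_le0.
have T_gt0 t : 1 + \sum_i \sum_j `|M i j| <= t -> 0 < (shifted_det_poly M).[t].
  move/semipositive_shift; rewrite horner_shifted_det_poly.
  by case/(semipositive_Zmatrix_det_gt0 (Zmatrix_shift t ZM)).
have [q [t0q detq right_gt0]] := poly_last_root det_le0 T_gt0.
by exists q; split=> // [|t /right_gt0]; rewrite -horner_shifted_det_poly.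
Qed.

Lemma det_block_le k a (r : 'rV[R]_k) (c : 'cV[R]_k) (N : 'M[R]_k) :
  Zmatrix (block_mx a%:M r c N) -> semipositive N ->
  \det (block_mx a%:M r c N) <= a * \det N.
Proof.
move=> ZM semN; have [ZN _ c_le0] := Zmatrix_block ZM.
have [detN_gt0 solN] := semipositive_Zmatrix_det_gt0 ZN semN.
have [z z_ge0 zN] := Zmatrix_block_schur_vector ZM solN.
by rewrite (det_block_schur _ _ zN) ler_pM2r // gerDl row_mul_col_le0.
Qed.

Section BlockMMatrix.
Variables (k : nat) (a : R) (r : 'rV[R]_k) (c : 'cV[R]_k) (N : 'M[R]_k).
Local Notation M := (block_mx a%:M r c N).

Lemma shifted_det_pos_drsub :
  (forall N' : 'M[R]_k, Zmatrix N' -> shifted_det_pos N' -> semipositive N') ->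
  Zmatrix M -> shifted_det_pos M -> shifted_det_pos N.
Proof.
(* Otherwise det (N + t) has a last root q >= 0; for t > q the Schur bound
   det (M + t) <= (a + t) det (N + t) holds and passes to t = q. *)
move=> IH ZM posM t0 t0_ge0; rewrite ltNge; apply/negP => detN_le0.
have [ZN _ _] := Zmatrix_block ZM.
have [q [t0q detNq detN_gt0]] := Zmatrix_shifted_det_last_root ZN detN_le0.
pose g := (a%:P + 'X) * shifted_det_poly N - shifted_det_poly M.
have : 0 <= g.[q].
  apply: poly_ge0_right_limit => t qt.
  have semNt : semipositive (N + t%:M).
    apply: IH => [|u u_ge0]; first exact: Zmatrix_shift.
    by rewrite -addrA -raddfD detN_gt0 //; lra.
  rewrite !hornerE !horner_shifted_det_poly subr_ge0 block_mx_shift.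
  by apply: det_block_le semNt; rewrite -block_mx_shift; apply: Zmatrix_shift.
rewrite !hornerE !horner_shifted_det_poly detNq mulr0 sub0r oppr_ge0.
by rewrite leNgt posM // (le_trans t0_ge0 t0q).
Qed.

Lemma semipositive_block : Zmatrix M -> semipositive N -> 0 < \det M -> semipositive M.
Proof.
move=> ZM semN detM_gt0; have [ZN _ c_le0] := Zmatrix_block ZM.
have [detN_gt0 solN] := semipositive_Zmatrix_det_gt0 ZN semN.
have [z z_ge0 zN] := Zmatrix_block_schur_vector ZM solN.
have s_gt0 : 0 < a + (z *m c) 0 0.
  by move: detM_gt0; rewrite (det_block_schur _ _ zN) pmulr_lgt0.
case: semN => wN wN_gt0 wNN_gt0.
have wNc_le0 := row_mul_col_le0 (fun j => ltW (wN_gt0 j)) c_le0.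
(* e is chosen to make the first entry of w M equal to e itself. *)
pose e := (a + (z *m c) 0 0) / (1 - (wN *m c) 0 0).
have e_gt0 : 0 < e by rewrite divr_gt0 // subr_gt0 (le_lt_trans wNc_le0).
have eE : e * (1 - (wN *m c) 0 0) = a + (z *m c) 0 0.
  by rewrite divfK // gt_eqF // subr_gt0 (le_lt_trans wNc_le0).
exists (row_mx (1 : R)%:M (z + e *: wN)).
  apply/pos_row_mxP; split=> [|j]; first exact: ltr01.
  by rewrite !mxE; apply: ltr_wpDl (z_ge0 j) (mulr_gt0 e_gt0 (wN_gt0 j)).
rewrite mul_row_block_scalar !mulmxDl -!scalemxAl zN scale1r addrA subrr add0r.
apply/pos_row_mxP; split=> [|j]; last by rewrite mxE mulr_gt0.
by rewrite mul1r mxE [(e *: (wN *m c)) 0 0]mxE; lra.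
Qed.

End BlockMMatrix.

Lemma Zmatrix_shifted_det_pos_semipositive k (M : 'M[R]_k) :
  Zmatrix M -> shifted_det_pos M -> semipositive M.
Proof.
elim: k M => [|k IH] M ZM posM; first by exists 0; case.
have [a [r [c [N def_M]]]] := block_mx_scalar_cases (M : 'M_(1 + k)).
rewrite {M}def_M in ZM posM *.
have [ZN _ _] := Zmatrix_block ZM.
apply: semipositive_block ZM (IH N ZN (shifted_det_pos_drsub IH ZM posM)) _.
by have := posM 0 (lexx 0); rewrite raddf0 addr0.
Qed.

Lemma shifted_det_pos_of_neq0 k (M : 'M[R]_k) :
  Zmatrix M -> (forall t, 0 <= t -> \det (M + t%:M) != 0) -> shifted_det_pos M.
Proof.
move=> ZM det_neq0 t0 t0_ge0; rewrite ltNge; apply/negP => det_le0.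
have [q [t0q detq _]] := Zmatrix_shifted_det_last_root ZM det_le0.
by have := det_neq0 q (le_trans t0_ge0 t0q); rewrite detq eqxx.
Qed.

Lemma Zmatrix_row_pos k (M : 'M[R]_k) (x : 'rV[R]_k) :
  Zmatrix M -> nonneg_row x -> pos_row (x *m M) -> pos_row x.
Proof.
move=> ZM x_ge0 xM_gt0 j; rewrite lt_def x_ge0 andbT; apply/eqP => xj0.
have := xM_gt0 j; rewrite mxE (bigD1 j) //= xj0 mul0r add0r ltNge.
by rewrite sumr_le0 // => i ij; rewrite mulr_ge0_le0 // ZM.
Qed.

Lemma Zmatrix_semipositive_pos_solution k (M : 'M[R]_k) :
  Zmatrix M -> semipositive M -> exists2 x, pos_row x & x *m M = const_mx 1.
Proof.
move=> ZM semM; have [_ solM] := semipositive_Zmatrix_det_gt0 ZM semM.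
have one_ge0 : nonneg_row (const_mx 1 : 'rV[R]_k) by move=> j; rewrite mxE ler01.
have [x x_ge0 xM] := solM _ one_ge0.
exists x => //; apply: Zmatrix_row_pos ZM x_ge0 _ => j.
by rewrite xM mxE ltr01.
Qed.

End MMatrices.

Section LinearDrift.
Set Implicit Arguments. Unset Strict Implicit. Unset Printing Implicit Defensive.
Variable R : realType.

Lemma Zmatrix_oppAmat n (b d : 'I_n -> R) (theta : 'I_n -> 'I_n -> R) :
  (forall i j, i != j -> 0 <= theta i j) -> Zmatrix (- Amat b d theta).
Proof.
by move=> theta_ge0 i j ij; rewrite !mxE (negbTE ij) oppr_le0 theta_ge0 // eq_sym.
Qed.

Lemma stable_shifted_det_neq0 n (A : 'M[R]_n) :
  (forall z : R[i], complex_eigenvalue A z -> complex.Re z < 0) ->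
  forall t, 0 <= t -> \det (- A + t%:M) != 0.
Proof.
move=> stableA t; apply: contraTN => /det0P[v v_neq0 vAt].
have : eigenvalue A t.
  apply/eigenvalueP; exists v => //; apply/eqP; rewrite eq_sym -subr_eq0.
  by rewrite -vAt mulmxDr mulmxN mul_mx_scalar addrC.
by rewrite -(eigenvalue_map (real_complex R)) => /stableA /=; rewrite -ltNge.
Qed.

Lemma linear_drift_bound n (A : 'M[R]_n) (B : 'cV[R]_n) (x : 'rV[R]_n) :
  (0 < n)%N -> pos_row x -> x *m A = - const_mx 1 ->
  exists (v : 'cV[R]_n) (c R0 : R),
    (forall i, 0 < v i 0) /\ 0 < c /\ 0 <= R0 /\
    forall y : 'cV[R]_n, (forall i, 0 <= y i 0) -> R0 <= norm1 y ->
      dotv v (A *m y + B) < - c * (dotv v y + 1).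
Proof.
move=> n_gt0 x_gt0 xA.
have dotvE y : dotv x^T y = (x *m y) 0 0.
  by rewrite /dotv mxE; apply: eq_bigr => i _; rewrite mxE.
pose V := \sum_i x 0 i.
have x_le_V i : x 0 i <= V.
  by rewrite /V (bigD1 i) //= lerDl sumr_ge0 // => j _; rewrite ltW.
have V_gt0 : 0 < V := lt_le_trans (x_gt0 (Ordinal n_gt0)) (x_le_V _).
pose c := (2 * V)^-1.
have c_gt0 : 0 < c by rewrite invr_gt0 mulr_gt0.
have cV : c * V = 1 / 2 by rewrite /c invfM -mulrA mulVf ?gt_eqF // mulr1 div1r.
pose K := `|(x *m B) 0 0|.
exists x^T, c, (2 * (K + c) + 1); split; first by move=> i; rewrite mxE.
do 2!split => //; first by rewrite /K; have := normr_ge0 ((x *m B) 0 0); lra.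
move=> y y_ge0; rewrite /norm1 (eq_bigr (fun i => y i 0)) => [y_large|i _]; last first.
  by rewrite ger0_norm.
rewrite !dotvE mulmxDr mulmxA xA mxE mulNmx [(- (const_mx 1 *m y)) 0 0]mxE.
have -> : ((const_mx 1 : 'rV[R]_n) *m y) 0 0 = \sum_i y i 0.
  by rewrite mxE; apply: eq_bigr => i _; rewrite mxE mul1r.
have xy_le : (x *m y) 0 0 <= V * \sum_i y i 0.
  rewrite mxE mulr_sumr; apply: ler_sum => i _.
  by apply: ler_wpM2r; [apply: y_ge0 | apply: x_le_V].
have := ler_wpM2l (ltW c_gt0) xy_le; rewrite mulrA cV.
have := ler_norm ((x *m B) 0 0); rewrite -/K; lra.
Qed.

End LinearDrift.

Theorem lemma1 (R : realType) (n : nat) (b B d : 'I_n -> R)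
  (theta : 'I_n -> 'I_n -> R) :
  (1 <= n)%N ->
  (forall i, 0 <= b i) -> (forall i, 0 <= B i) -> (forall i, 0 <= d i) ->
  (forall i j, i != j -> 0 <= theta i j) ->
  strongly_connected (theta_edge theta) ->
  (forall z : R[i], complex_eigenvalue (Amat b d theta) z -> complex.Re z < 0) ->
  (exists i, B i != 0) ->
  exists (v : 'cV[R]_n) (c R0 : R),
    (forall i, 0 < v i 0) /\ 0 < c /\ 0 <= R0 /\
    forall x : 'cV[R]_n, (forall i, 0 <= x i 0) -> R0 <= norm1 x ->
      dotv v (Amat b d theta *m x + \col_i B i) < - c * (dotv v x + 1).
Proof.
move=> n_gt0 _ _ _ theta_ge0 _ stableA _.
have ZA := Zmatrix_oppAmat b d theta_ge0.
have posA := shifted_det_pos_of_neq0 ZA (stable_shifted_det_neq0 stableA).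
have [x x_gt0 xA] := Zmatrix_semipositive_pos_solution ZA
  (Zmatrix_shifted_det_pos_semipositive ZA posA).
apply: linear_drift_bound n_gt0 x_gt0 _.
by rewrite -[Amat _ _ _]opprK mulmxN xA.
Qed.
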